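(* Let $(Q(M))_{M\in\mathcal N}$ be a family of matrices satisfying (A1)–(A3), and let $p$ be a stochastic choice function such that $p(\cdot,\{i,j\})\bigl(I-Q(\{i,j\})\bigr)=0$ for all distinct $i,j\in X$. Fix $M\in\mathcal N$ and let $G(M)=\{(i,j)\in M\times M:\delta_{ij}(M)>0\}$ (for $(i,j)\in G(M)$ necessarily $p(j,\{i,j\})>0$). Let $D(M)$ be the $|M|\times|G(M)|$ matrix with rows indexed by $m\in M$ and columns by $(i,j)\in G(M)$, with entries $D_{m,(i,j)}=\delta_{ij}(M)/p(j,\{i,j\})$ if $m=i$, $D_{m,(i,j)}=-\delta_{ij}(M)/p(j,\{i,j\})$ if $m=j$, and $0$ otherwise, and let $\gamma(M)$ be the column vector with entries $\gamma_{(i,j)}(M)=q_{ij}(M)$, $(i,j)\in G(M)$. Then $p(\cdot,M)(I-Q(M))=0$ if and only if $D(M)\gamma(M)=0$, i.e. if and only if for every $j\in M$ $$\sum_{i:(j,i)\in G(M)}\frac{\delta_{ji}(M)\,q_{ji}(M)}{p(i,\{i,j\})}-\sum_{i:(i,j)\in G(M)}\frac{\delta_{ij}(M)\,q_{ij}(M)}{p(j,\{i,j\})}=0.$$ (If $G(M)=\emptyset$ the condition is vacuous and $p(\cdot,M)(I-Q(M))=0$ holds.)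
   Context: $X$ is a finite set of alternatives; a menu is a nonempty subset of $X$, and $\mathcal N$ denotes the set of all menus. A stochastic choice function is a map $p:X\times\mathcal N\to[0,1]$ with $\sum_{i\in M}p(i,M)=1$ and $p(i,M)=0$ for $i\notin M$; $p(\cdot,M)$ denotes the row vector $(p(i,M))_{i\in M}$. For $M\in\mathcal N$ and $i,j\in M$ let $\delta_{ij}(M)=p(i,M)\,p(j,\{i,j\})-p(i,\{i,j\})\,p(j,M)$. The family $Q(M)=(q_{ij}(M))_{i,j\in M}$, $M\in\mathcal N$, has nonnegative entries and satisfies for all $M\in\mathcal N$ and distinct $i,j\in M$: (A1) $q_{ii}(M)=1-\sum_{k\neq i}q_{ik}(M)>0$; (A2) if $q_{ij}(\{i,j\})=0$ then $q_{ji}(\{i,j\})>0$; (A3) $q_{ij}(\{i,j\})\,q_{ji}(M)=q_{ji}(\{i,j\})\,q_{ij}(M)$. *)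

From mathcomp Require Import all_boot all_order all_algebra.
Set Implicit Arguments. Unset Strict Implicit. Unset Printing Implicit Defensive.
Import Order.TTheory GRing.Theory Num.Theory.
Local Open Scope ring_scope.

Section Defs.
Variables (X : finType) (R : realFieldType).

Definition is_scf (p : X -> {set X} -> R) : Prop :=
  forall M : {set X}, M != set0 ->
    (forall i, 0 <= p i M <= 1) /\
    \sum_(i in M) p i M = 1 /\
    (forall i, i \notin M -> p i M = 0).

(* Q M i j = q_ij(M). Assumptions (A1)-(A3) plus nonnegativity of entries. *)
Definition QA (Q : {set X} -> X -> X -> R) : Prop :=
  forall M : {set X}, M != set0 ->
    (forall i j, i \in M -> j \in M -> 0 <= Q M i j) /\
    (forall i, i \in M ->
        Q M i i = 1 - \sum_(k in M | k != i) Q M i k /\ 0 < Q M i i) /\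
    (forall i j, i \in M -> j \in M -> i != j ->
        (Q [set i; j] i j = 0 -> 0 < Q [set i; j] j i) /\
        Q [set i; j] i j * Q M j i = Q [set i; j] j i * Q M i j).

(* p(.,M) (I - Q(M)) = 0, written out column by column (columns k in M). *)
Definition stationary (p : X -> {set X} -> R) (Q : {set X} -> X -> X -> R)
    (M : {set X}) : Prop :=
  forall k, k \in M -> \sum_(m in M) p m M * ((m == k)%:R - Q M m k) = 0.

Definition delta (p : X -> {set X} -> R) (M : {set X}) (i j : X) : R :=
  p i M * p j [set i; j] - p i [set i; j] * p j M.

Definition Gset (p : X -> {set X} -> R) (M : {set X}) : {set X * X} :=
  [set ij | [&& ij.1 \in M, ij.2 \in M & 0 < delta p M ij.1 ij.2]].

Definition Dmat (p : X -> {set X} -> R) (M : {set X}) (m : X) (ij : X * X) : R :=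
  if m == ij.1 then delta p M ij.1 ij.2 / p ij.2 [set ij.1; ij.2]
  else if m == ij.2 then - (delta p M ij.1 ij.2 / p ij.2 [set ij.1; ij.2])
  else 0.

Definition gammav (Q : {set X} -> X -> X -> R) (M : {set X}) (ij : X * X) : R :=
  Q M ij.1 ij.2.

(* D(M) gamma(M) = 0, the matrix product written out row by row (rows m in M). *)
Definition Dgamma_zero (p : X -> {set X} -> R) (Q : {set X} -> X -> X -> R)
    (M : {set X}) : Prop :=
  forall m, m \in M -> \sum_(ij in Gset p M) Dmat p M m ij * gammav Q M ij = 0.

End Defs.

(* Stationarity of p(.,{i,j}) under Q({i,j}) is the detailed balance
   p(i,{i,j}) q_ij({i,j}) = p(j,{i,j}) q_ji({i,j}), and (A3) transports it to
   p(i,{i,j}) q_ij(M) = p(j,{i,j}) q_ji(M) for every menu M containing i and j.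
   Since the rows of Q(M) sum to one, column k of p(.,M)(I - Q(M)) is the net
   flux sum_m (p(k,M) q_km(M) - p(m,M) q_mk(M)); by the transported balance each
   summand is the contribution of (k,m) or of (m,k) to G(M), whichever of
   delta_km(M) = - delta_mk(M) is positive, which is exactly row k of D(M) gamma(M). *)
From mathcomp Require Import all_boot all_order all_algebra.
From mathcomp Require Import ring.
Import Order.TTheory GRing.Theory Num.Theory.
Set Implicit Arguments.
Unset Strict Implicit.
Unset Printing Implicit Defensive.
Local Open Scope ring_scope.

Lemma balance_transfer (F : idomainType) (u v a b x y : F) :
  a != 0 \/ b != 0 -> u * a = v * b -> a * y = b * x -> u * x = v * y.
Proof.
case=> [a_neq0|b_neq0] uv ab.
- apply: (mulIf a_neq0); rewrite -mulrA [x * a]mulrC mulrA uv -mulrA -ab; ring.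
- apply: (mulIf b_neq0); rewrite -mulrA [x * b]mulrC -ab mulrA uv; ring.
Qed.

Lemma net_flux_split (R : realFieldType) (a b u v x y : R) :
  0 <= a -> 0 <= b -> u + v = 1 -> u * x = v * y ->
  a * x - b * y =
    (if 0 < a * v - u * b then (a * v - u * b) / v * x else 0) -
    (if 0 < b * u - v * a then (b * u - v * a) / u * y else 0).
Proof.
move=> a_ge0 b_ge0 uv1 uxvy.
have -> : b * u - v * a = - (a * v - u * b) by ring.
rewrite oppr_gt0; have [d_gt0|d_lt0|d0] := ltgtP 0 (a * v - u * b).
- have v_neq0 : v != 0.
    apply: contraTneq d_gt0 => v0; move: uv1; rewrite v0 addr0 => ->.
    by rewrite mulr0 mul1r sub0r oppr_gt0 -leNgt.
  have -> : (a * v - u * b) / v * x = (a * v * x - b * (u * x)) / v by field.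
  by rewrite subr0 uxvy; field.
- have u_neq0 : u != 0.
    apply: contraTneq d_lt0 => u0; move: uv1; rewrite u0 add0r => ->.
    by rewrite mul0r mulr1 subr0 -leNgt.
  have -> : - (a * v - u * b) / u * y = (b * u * y - a * (v * y)) / u by field.
  by rewrite sub0r -uxvy; field.
- have net_flux : (a * x - b * y) * (u + v) - (a * v - u * b) * (x + y)
                  = (a + b) * (u * x - v * y) by ring.
  by rewrite uv1 mulr1 -d0 mul0r subr0 uxvy subrr mulr0 in net_flux; rewrite subr0.
Qed.

Lemma sum_set2 (X : finType) (R : nmodType) (i j : X) (F : X -> R) :
  i != j -> \sum_(k in [set i; j]) F k = F i + F j.
Proof. by move=> ij; rewrite big_setU1 ?big_set1 // in_set1. Qed.

Lemma stochastic_column (X : finType) (R : comPzRingType) (M : {set X})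
    (p : X -> R) (Q : X -> X -> R) (k : X) :
  k \in M -> \sum_(m in M) Q k m = 1 ->
  \sum_(m in M) p m * ((m == k)%:R - Q m k) =
  \sum_(m in M) (p k * Q k m - p m * Q m k).
Proof.
move=> kM Qk1.
rewrite sumrB -mulr_sumr Qk1 mulr1.
under eq_bigr do rewrite mulrBr; rewrite sumrB; congr (_ - _).
rewrite (bigD1 k) //= eqxx mulr1 big1 ?addr0 // => m /andP[_ /negbTE->].
exact: mulr0.
Qed.

Section ChoiceModel.
Variables (X : finType) (R : realFieldType).
Variables (p : X -> {set X} -> R) (Q : {set X} -> X -> X -> R).
Hypotheses (p_scf : is_scf p) (QA_Q : QA Q).
Hypothesis stationary_pairs : forall i j : X, i != j -> stationary p Q [set i; j].

Definition edge_flux (M : {set X}) (i j : X) : R :=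
  if 0 < delta p M i j then delta p M i j / p j [set i; j] * Q M i j else 0.

Lemma set2_neq0 (i j : X) : [set i; j] != set0.
Proof. by apply/set0Pn; exists i; rewrite !inE eqxx. Qed.

Lemma Q_row_sum (M : {set X}) (k : X) :
  M != set0 -> k \in M -> \sum_(m in M) Q M k m = 1.
Proof.
move=> M_neq0 kM; have [_ [Qdiag _]] := QA_Q M_neq0.
by rewrite (bigD1 k) //= (Qdiag k kM).1 subrK.
Qed.

Lemma pair_detailed_balance (i j : X) : i != j ->
  p i [set i; j] * Q [set i; j] i j = p j [set i; j] * Q [set i; j] j i.
Proof.
move=> ij; have iM : i \in [set i; j] by rewrite !inE eqxx.
have := stationary_pairs ij iM.
rewrite stochastic_column ?Q_row_sum ?set2_neq0 // sum_set2 //.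
by rewrite subrr add0r => /eqP; rewrite subr_eq0 => /eqP.
Qed.

Lemma detailed_balance (M : {set X}) (i j : X) :
  M != set0 -> i \in M -> j \in M -> i != j ->
  p i [set i; j] * Q M i j = p j [set i; j] * Q M j i.
Proof.
move=> M_neq0 iM jM ij; have [_ [_ QA_pairs]] := QA_Q M_neq0.
have [Qpair_pos Q_ratio] := QA_pairs i j iM jM ij.
apply: balance_transfer Q_ratio; last exact: pair_detailed_balance.
have [Qij0|] := eqVneq (Q [set i; j] i j) 0; last by left.
by right; rewrite gt_eqF ?Qpair_pos.
Qed.

Lemma delta_diag (M : {set X}) (i : X) : delta p M i i = 0.
Proof. by rewrite /delta mulrC subrr. Qed.

Lemma net_flux (M : {set X}) (i j : X) : M != set0 -> i \in M -> j \in M ->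
  p i M * Q M i j - p j M * Q M j i = edge_flux M i j - edge_flux M j i.
Proof.
move=> M_neq0 iM jM; have [->|ij] := eqVneq i j; first by rewrite !subrr.
have [p_bounds _] := p_scf M_neq0.
have [_ [pair_sum _]] := p_scf (set2_neq0 i j).
rewrite /edge_flux /delta (setUC [set j]).
apply: net_flux_split; [by case/andP: (p_bounds i) | by case/andP: (p_bounds j)|..].
- by rewrite -pair_sum sum_set2.
- exact: detailed_balance.
Qed.

Lemma Dgamma_entry (M : {set X}) (k i j : X) :
  (if 0 < delta p M i j then Dmat p M k (i, j) * gammav Q M (i, j) else 0) =
  (if i == k then edge_flux M i j else 0) - (if j == k then edge_flux M i j else 0).
Proof.
rewrite /Dmat /gammav /edge_flux /= ![k == _]eq_sym.
case: eqVneq => [->|ik]; case: eqVneq => [->|jk] //=.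
- by rewrite delta_diag ltxx subrr.
- by rewrite subr0; case: ifP.
- by rewrite sub0r; case: ifP; rewrite ?mulNr ?oppr0.
- by rewrite subrr mul0r; case: ifP.
Qed.

Lemma Dgamma_row (M : {set X}) (k : X) : k \in M ->
  \sum_(ij in Gset p M) Dmat p M k ij * gammav Q M ij =
  \sum_(m in M) (edge_flux M k m - edge_flux M m k).
Proof.
move=> kM.
transitivity (\sum_(i in M) \sum_(j in M)
  ((if i == k then edge_flux M i j else 0) - (if j == k then edge_flux M i j else 0))).
  rewrite pair_big /= [LHS]big_mkcond [RHS]big_mkcond.
  apply: eq_bigr => -[i j] _; rewrite inE /= -Dgamma_entry.
  by case: (i \in M); case: (j \in M).
under eq_bigr do rewrite sumrB; rewrite !sumrB; congr (_ - _).
- rewrite (bigD1 k) //= eqxx [s in _ + s]big1 ?addr0 // => i /andP[_ /negbTE ik].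
  by rewrite big1 // => j _; rewrite ik.
- apply: eq_bigr => i _; rewrite (bigD1 k) //= eqxx [s in _ + s]big1 ?addr0 //.
  by move=> j /andP[_ /negbTE->].
Qed.

End ChoiceModel.

Theorem lemmaA4 (X : finType) (R : realFieldType)
    (p : X -> {set X} -> R) (Q : {set X} -> X -> X -> R) :
  is_scf p -> QA Q ->
  (forall i j : X, i != j -> stationary p Q [set i; j]) ->
  forall M : {set X}, M != set0 ->
    (stationary p Q M <-> Dgamma_zero p Q M).
Proof.
move=> p_scf QA_Q stationary_pairs M M_neq0.
have column_eq_row k : k \in M ->
  \sum_(m in M) p m M * ((m == k)%:R - Q M m k) =
  \sum_(ij in Gset p M) Dmat p M k ij * gammav Q M ij.
  move=> kM; rewrite stochastic_column ?Q_row_sum // Dgamma_row //.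
  by apply: eq_bigr => m mM; rewrite net_flux.
split=> zero k kM; have := zero k kM; first by rewrite column_eq_row.
by rewrite -column_eq_row.
Qed.
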